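(* Let $X$ be an $n$-dimensional real normed space and let $Y \subseteq X$ be a $k$-dimensional subspace, where $1 \leq k \leq n-1$. Suppose that there exists a minimal Chalmers–Metcalf operator $T$ for $Y$ supported on $l$ pairs. Then $\dim \mathcal{P}_{\min}(X, Y) \leq k(n-k) - l + 1$.
   Context: A projection onto $Y$ is a linear $P:X\to Y$ with $P|_Y=\mathrm{id}_Y$; $\lambda(Y,X)$ is the infimum of the operator norms of projections and $\mathcal{P}_{\min}(X,Y)$ the set of projections of norm $\lambda(Y,X)$; $\dim\mathcal{P}_{\min}(X,Y)$ is the affine dimension of this convex subset of $\mathcal{L}(X,X)$. For $x\in X$, $f\in X^*$, $x\otimes f$ is the operator $z\mapsto f(z)x$. A Chalmers–Metcalf operator for $Y$ is an operator $T=\sum_{i=1}^{l}\alpha_i x_i\otimes f_i:X\to X$ with $(x_i,f_i)\in\mathrm{ext}\,B_X\times\mathrm{ext}\,B_{X^*}$ (extreme points of the unit balls of $X$ and $X^*$), $\alpha_i>0$, $\sum_i\alpha_i=1$, $T(Y)\subseteq Y$, and $f_i(P_0(x_i))=\|P_0\|=\lambda(Y,X)$ for all $i$ and some fixed minimal projection $P_0$; it is supported on the $l$ pairs $(x_i,f_i)$. It is minimal if no proper subset of the pairs $(x_i,f_i)$ yields a Chalmers–Metcalf operator for $Y$ with any choice of weights. *)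

From HB Require Import structures.
From mathcomp Require Import all_boot all_order all_algebra.
From mathcomp Require Import boolp classical_sets reals.
Set Implicit Arguments. Unset Strict Implicit. Unset Printing Implicit Defensive.
Import Order.TTheory GRing.Theory Num.Theory.
Local Open Scope ring_scope.
Local Open Scope classical_set_scope.

(* Model: X = row vectors 'rV[R]_n equipped with a norm N.  Operators
   X -> X are matrices acting on the right: A(x) = x *m A.
   Functionals f in X^* are column vectors: f(x) = (x *m f) 0 0.
   The operator x (x) f : z |-> f(z) x is the matrix f *m x.
   A subspace Y of X is given as the row space of a matrix Y : 'M_n. *)

Section Defs.
Variables (R : realType) (n : nat).

Definition fapp (f : 'cV[R]_n) (x : 'rV[R]_n) : R := (x *m f) 0 0.

Definition is_norm (N : 'rV[R]_n -> R) : Prop :=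
  [/\ forall x, N x = 0 -> x = 0,
      forall (a : R) x, N (a *: x) = `|a| * N x &
      forall x y, N (x + y) <= N x + N y].

Definition unit_ball (N : 'rV[R]_n -> R) : set 'rV[R]_n := [set x | N x <= 1].

Definition dual_norm (N : 'rV[R]_n -> R) (f : 'cV[R]_n) : R :=
  sup [set `|fapp f x| | x in unit_ball N].

Definition dual_unit_ball (N : 'rV[R]_n -> R) : set 'cV[R]_n :=
  [set f | dual_norm N f <= 1].

Definition extreme_point (V : lmodType R) (B : set V) (x : V) : Prop :=
  B x /\ forall y z (t : R), B y -> B z -> 0 < t < 1 ->
    x = t *: y + (1 - t) *: z -> y = z.

Definition op_norm (N : 'rV[R]_n -> R) (A : 'M[R]_n) : R :=
  sup [set N (x *m A) | x in unit_ball N].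

Definition is_projection (Y : 'M[R]_n) (P : 'M[R]_n) : Prop :=
  (P <= Y)%MS /\ forall y : 'rV[R]_n, (y <= Y)%MS -> y *m P = y.

Definition proj_const (N : 'rV[R]_n -> R) (Y : 'M[R]_n) : R :=
  inf [set op_norm N P | P in is_projection Y].

Definition Pmin (N : 'rV[R]_n -> R) (Y : 'M[R]_n) : set 'M[R]_n :=
  [set P | is_projection Y P /\ op_norm N P = proj_const N Y].

Definition affine_in (S : set 'M[R]_n) (d : nat) : bool :=
  `[< exists (P0 : 'M[R]_n) (V : 'M[R]_(n * n)),
        (\rank V <= d)%N /\ forall P, S P -> (mxvec (P - P0) <= V)%MS >].

Lemma affine_in_ex (S : set 'M[R]_n) : exists d, affine_in S d.
Proof.
exists (n * n)%N; apply/asboolP; exists 0, 1%:M; split.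
  by rewrite mxrank1.
by move=> P _; rewrite submx1.
Qed.

Definition affdim (S : set 'M[R]_n) : int :=
  if pselect (exists P, S P) then (ex_minn (affine_in_ex S))%:Z else (-1)%R.

Definition CM_on (N : 'rV[R]_n -> R) (Y : 'M[R]_n) (l : nat)
    (x : 'I_l -> 'rV[R]_n) (f : 'I_l -> 'cV[R]_n) (a : 'I_l -> R)
    (J : {set 'I_l}) : Prop :=
  [/\ forall i, i \in J -> extreme_point (unit_ball N) (x i)
                        /\ extreme_point (dual_unit_ball N) (f i),
      forall i, i \in J -> 0 < a i,
      \sum_(i in J) a i = 1,
      (Y *m (\sum_(i in J) a i *: (f i *m x i)) <= Y)%MS &
      exists P0, Pmin N Y P0 /\
        forall i, i \in J -> fapp (f i) (x i *m P0) = proj_const N Y].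

Definition CM_op (l : nat) (x : 'I_l -> 'rV[R]_n) (f : 'I_l -> 'cV[R]_n)
    (a : 'I_l -> R) : 'M[R]_n := \sum_(i < l) a i *: (f i *m x i).

Definition is_CM_operator (N : 'rV[R]_n -> R) (Y : 'M[R]_n) (l : nat)
    (x : 'I_l -> 'rV[R]_n) (f : 'I_l -> 'cV[R]_n) (a : 'I_l -> R)
    (T : 'M[R]_n) : Prop :=
  CM_on N Y x f a [set: 'I_l] /\ T = CM_op x f a.

Definition CM_minimal (N : 'rV[R]_n -> R) (Y : 'M[R]_n) (l : nat)
    (x : 'I_l -> 'rV[R]_n) (f : 'I_l -> 'cV[R]_n) : Prop :=
  forall (J : {set 'I_l}) (b : 'I_l -> R),
    J \proper [set: 'I_l] -> ~ CM_on N Y x f b J.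

End Defs.

From HB Require Import structures.
From mathcomp Require Import all_boot all_order all_algebra.
From mathcomp Require Import boolp classical_sets reals.
From mathcomp Require Import topology normedtype derive.
From mathcomp Require Import ring lra zify.
Set Implicit Arguments.
Unset Strict Implicit.
Unset Printing Implicit Defensive.
Import Order.TTheory GRing.Theory Num.Theory.
Import numFieldNormedType.Exports.
Local Open Scope ring_scope.

(* Let P0 be the minimal projection in the definition of the Chalmers-Metcalf
   operator T = sum_i a_i x_i (x) f_i, and P any minimal projection.  Since
   T(Y) is contained in Y and P - P0 = (1 - P0)(P - P0)P0, the trace
   tr((P - P0)T) vanishes; as f_i(x_i P) <= |P| = f_i(x_i P0) and a_i > 0,
   every tr((P - P0)(x_i (x) f_i)) vanishes.  So P_min(X, Y) lies in P0 plus
   the corners (1 - P0) Z P0, a space of dimension at most k(n - k), cut by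
   the l linear forms D |-> tr(D (x_i (x) f_i)).  These forms have rank at
   least l - 1 on the corners: a relation sum_i c_i tr(D (x_i (x) f_i)) = 0
   on corners D, with sum_i c_i = 0, makes sum_i c_i x_i (x) f_i leave Y
   invariant (an operator C does so iff tr((1 - P0) Z P0 C) = 0 for all Z),
   and moving the weights a along c until one of them vanishes yields a
   Chalmers-Metcalf operator on fewer pairs, contradicting minimality. *)

Lemma mx_entry_le_norm {R : realType} {m p : nat} (A : 'M[R]_(m, p)) i j :
  `|A i j| <= `|A|.
Proof.
rewrite [leRHS]/Num.norm /= mx_normrE.
by apply/bigmax_geP; right; exists (i, j).
Qed.

Section NormFacts.
Local Open Scope classical_set_scope.
Variables (R : realType) (n : nat) (N : 'rV[R]_n -> R).
Hypothesis hN : is_norm N.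

Lemma isnorm0 : N 0 = 0.
Proof. by have [_ NZ _] := hN; rewrite -(scale0r 0) NZ normr0 mul0r. Qed.

Lemma isnormN x : N (- x) = N x.
Proof. by have [_ NZ _] := hN; rewrite -scaleN1r NZ normrN normr1 mul1r. Qed.

Lemma isnorm_ge0 x : 0 <= N x.
Proof.
have [_ _ ND] := hN; have := ND x (- x).
by rewrite subrr isnorm0 isnormN -mulr2n pmulrn_lge0.
Qed.

Lemma isnorm_gt0 x : x != 0 -> 0 < N x.
Proof.
have [N0 _ _] := hN; rewrite lt_def isnorm_ge0 andbT.
by apply: contra => /eqP /N0 ->.
Qed.

Lemma isnorm_dist x y : `|N x - N y| <= N (x - y).
Proof.
have [_ _ ND] := hN.
have := ND (x - y) y; have := ND (y - x) x.
rewrite !subrK -opprB isnormN => hy hx.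
by rewrite ler_norml; apply/andP; split; lra.
Qed.

Lemma isnorm_mulmx_le x (A : 'M[R]_n) :
  N (x *m A) <= `|x| * \sum_j N (row j A).
Proof.
have [_ NZ ND] := hN.
rewrite mulmx_sum_row mulr_sumr.
elim/big_ind2: _ => [|u1 r1 u2 r2 h1 h2|j _].
- by rewrite isnorm0.
- exact: le_trans (ND _ _) (lerD h1 h2).
- by rewrite NZ ler_wpM2r ?isnorm_ge0 ?mx_entry_le_norm.
Qed.

Lemma isnorm_continuous : continuous N.
Proof.
pose K := \sum_j N (row j (1%:M : 'M[R]_n)) + 1.
have K0 : 0 < K by rewrite ltr_wpDl // sumr_ge0 // => j _; exact: isnorm_ge0.
have N_lip t u : `|N t - N u| <= `|t - u| * K.
  apply: le_trans (isnorm_dist t u) _.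
  have := isnorm_mulmx_le (t - u) 1%:M; rewrite mulmx1 => /le_trans; apply.
  by rewrite ler_wpM2l // lerDl.
move=> x; apply/(@cvgrPdist_lt _ _ _ _ (nbhs_filter x)) => e e0.
near=> t; apply: le_lt_trans (N_lip x t) _; rewrite -ltr_pdivlMr //.
near: t; apply: (@cvgr_dist_lt _ _ _ (nbhs x) (nbhs_filter x) id x).
  exact: (@cvg_id _ (nbhs x)).
by rewrite divr_gt0.
Unshelve. all: by end_near.
Qed.

(* Equivalence with the max norm: without it the suprema defining [op_norm]
   and [dual_norm] could be taken over unbounded sets. *)
Lemma isnorm_ge_normr : exists2 c, 0 < c & forall x, c * `|x| <= N x.
Proof.
have [_ NZ _] := hN.
pose S := [set x : 'rV[R]_n | `|x| = 1].
have normalize x : x != 0 -> S (`|x|^-1 *: x).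
  by move=> x0; rewrite /S /= normrZ normfV normr_id mulVf ?normr_eq0.
have [S0|S0] := pselect (S !=set0); last first.
  exists 1 => // x; have [->|/normalize Sx] := eqVneq x 0.
    by rewrite normr0 mulr0 isnorm_ge0.
  by case: S0; exists (`|x|^-1 *: x).
have cS : compact S.
  apply: bounded_closed_compact.
    by exists 1; split=> [|y y1 x /= ->]; [exact: num_real | exact: ltW].
  have -> : S = (fun x => `|x|) @^-1` [set r | r = 1] by [].
  apply: preimage_closed; last exact: closed_eq.
  by move=> x _; exact: norm_continuous.
have cN : {within S, continuous N}.
  by apply: continuous_subspaceT => x; exact: isnorm_continuous.
have [c /set_mem Sc minN] := EVT_min_rV S0 cS cN.
have c0 : c != 0.
  apply/eqP => c0; move: Sc; rewrite /S /= c0 normr0.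
  by move=> /esym/eqP; rewrite oner_eq0.
exists (N c) => [|x]; first exact: isnorm_gt0.
have [->|x0] := eqVneq x 0; first by rewrite normr0 mulr0 isnorm_ge0.
have := minN _ (mem_set (normalize x x0)).
by rewrite NZ normfV normr_id ler_pdivlMl ?normr_gt0 // mulrC.
Qed.

Lemma unit_ball_bounded : exists C, forall x, N x <= 1 -> `|x| <= C.
Proof.
have [c c0 cN] := isnorm_ge_normr.
exists c^-1 => x x1; rewrite -(ler_pM2l c0) mulfV ?gt_eqF //.
exact: le_trans (cN x) x1.
Qed.

Lemma op_norm_ub x P : N x <= 1 -> N (x *m P) <= op_norm N P.
Proof.
move=> x1; apply: ub_le_sup; last by exists x.
have [C ballC] := unit_ball_bounded.
exists (C * \sum_j N (row j P)) => _ [y y1 <-].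
apply: le_trans (isnorm_mulmx_le y P) _; rewrite ler_wpM2r ?ballC //.
by rewrite sumr_ge0 // => j _; exact: isnorm_ge0.
Qed.

Lemma dual_norm_has_ub f : has_ubound [set `|fapp f x| | x in unit_ball N].
Proof.
have [C ballC] := unit_ball_bounded.
exists (C * \sum_j `|f j 0|) => _ [y y1 <-].
rewrite /fapp mxE; apply: le_trans (ler_norm_sum _ _ _) _.
rewrite mulr_sumr ler_sum // => j _; rewrite normrM ler_wpM2r //.
exact: le_trans (mx_entry_le_norm y 0 j) (ballC y y1).
Qed.

Lemma dual_norm_ge0 f : 0 <= dual_norm N f.
Proof.
apply: le_trans (ub_le_sup (dual_norm_has_ub f) _); last first.
  by exists 0; rewrite /unit_ball /= ?isnorm0.
by rewrite /fapp mul0mx mxE normr0.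
Qed.

Lemma fapp_le_dual_norm f y : fapp f y <= dual_norm N f * N y.
Proof.
have [_ NZ _] := hN.
have [->|y0] := eqVneq y 0; first by rewrite /fapp mul0mx mxE isnorm0 mulr0.
have Ny := isnorm_gt0 y0.
have y1 : unit_ball N ((N y)^-1 *: y).
  by rewrite /unit_ball /= NZ ger0_norm ?invr_ge0 ?isnorm_ge0 // mulVf ?gt_eqF.
have := ub_le_sup (dual_norm_has_ub f) (ex_intro2 _ _ _ y1 erefl).
rewrite /fapp -scalemxAl mxE normrM ger0_norm ?invr_ge0 ?isnorm_ge0 //.
by rewrite ler_pdivrMl // mulrC; apply: le_trans (ler_norm _).
Qed.

Lemma fapp_le_op_norm f x P :
  N x <= 1 -> dual_norm N f <= 1 -> fapp f (x *m P) <= op_norm N P.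
Proof.
move=> x1 f1; have xP : N (x *m P) <= op_norm N P := op_norm_ub P x1.
apply: le_trans (fapp_le_dual_norm f _) _.
apply: le_trans (ler_wpM2l (dual_norm_ge0 f) xP) _.
by rewrite ler_piMl // (le_trans (isnorm_ge0 _) xP).
Qed.

End NormFacts.

Section TraceForm.
Variables (R : comNzRingType) (n : nat).
Implicit Types (G Z : 'M[R]_n).

Lemma mxtrace_delta_mull G (i j : 'I_n) : \tr (delta_mx i j *m G) = G j i.
Proof.
rewrite mxtrace_mulC -(mul_delta_mx (0 : 'I_1)) mulmxA -colE mxtrace_mulC -rowE.
by rewrite trace_mx11 !mxE.
Qed.

Lemma mxtrace_mull_eq0 G : (forall Z, \tr (Z *m G) = 0) -> G = 0.
Proof.
by move=> trG0; apply/matrixP => j i; rewrite mxE -mxtrace_delta_mull.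
Qed.

Definition trace_pairing l (G : 'I_l -> 'M[R]_n) : 'M[R]_(n * n, l) :=
  \matrix_(r, i) \tr (vec_mx (delta_mx 0 r) *m G i).

Lemma mulmx_trace_pairing l (G : 'I_l -> 'M[R]_n) u :
  u *m trace_pairing G = \row_i \tr (vec_mx u *m G i).
Proof.
apply/rowP => i; rewrite !mxE {2}(row_sum_delta u) linear_sum /=.
rewrite mulmx_suml raddf_sum.
by apply: eq_bigr => r _; rewrite mxE linearZ /= -scalemxAl mxtraceZ.
Qed.

Lemma trace_pairing_comb l (G : 'I_l -> 'M[R]_n) u (c : 'rV_l) :
  (u *m trace_pairing G *m c^T) 0 0 = \tr (vec_mx u *m \sum_i c 0 i *: G i).
Proof.
rewrite mulmx_trace_pairing mxE mulmx_sumr raddf_sum /=; apply: eq_bigr => i _.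
by rewrite !mxE -scalemxAr mxtraceZ mulrC.
Qed.

End TraceForm.

Lemma exists_ker_sum0 (F : fieldType) m l (U : 'M[F]_(m, l)) :
  (\rank U + 1 < l)%N ->
  exists2 c : 'rV_l, c != 0 & U *m c^T = 0 /\ \sum_i c 0 i = 0.
Proof.
move=> rkU.
pose S := row_mx U^T (const_mx 1 : 'M[F]_(l, 1)).
have rkS : (\rank S < l)%N.
  rewrite -mxrank_tr tr_row_mx -addsmxE.
  apply: leq_ltn_trans (mxrank_adds_leqif _ _) _.
  by apply: leq_ltn_trans rkU; rewrite !mxrank_tr leq_add2l rank_leq_col.
have : kermx S != 0 by rewrite -mxrank_eq0 mxrank_ker subn_eq0 -ltnNge.
case/rowV0Pn => c /sub_kermxP.
rewrite mul_mx_row -row_mx0 => /eq_row_mx[cU c1] c0.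
exists c => //; split; first by rewrite -[U]trmxK -trmx_mul cU trmx0.
transitivity ((c *m (const_mx 1 : 'cV_l)) 0 0); last by rewrite c1 mxE.
by rewrite mxE; apply: eq_bigr => i _; rewrite mxE mulr1.
Qed.

Section Corners.
Variables (F : fieldType) (n : nat).
Implicit Types (E Z : 'M[F]_n).

(* [corner_space E] spans the [mxvec ((1 - E) *m Z *m E)]; factoring through
   the bases of [1 - E] and [E] bounds its rank by [\rank (1 - E) * \rank E]. *)
Definition corner_map E := mulmxr (row_base E) \o mulmx (col_base (1%:M - E)).
Arguments corner_map : clear implicits.

Definition corner_space E := lin_mx (corner_map E).

Lemma corner_mapE E Z :
  corner_map E (row_base (1%:M - E) *m Z *m col_base E) = (1%:M - E) *m Z *m E.
Proof.
change (col_base (1%:M - E) *m (row_base (1%:M - E) *m Z *m col_base E)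
          *m row_base E = (1%:M - E) *m Z *m E).
rewrite (mulmxA _ (_ *m Z)) (mulmxA (col_base _)) mulmx_base.
by rewrite -(mulmxA _ (col_base E)) mulmx_base.
Qed.

End Corners.

Section Projections.
Variables (R : realType) (n : nat) (Y : 'M[R]_n).
Implicit Types (P E C Z : 'M[R]_n).

Lemma projection_mulmx_id P m (M : 'M_(m, n)) :
  is_projection Y P -> (M <= Y)%MS -> M *m P = M.
Proof.
case=> _ PY MY; apply/row_matrixP => i; rewrite row_mul PY //.
exact: submx_trans (row_sub i M) MY.
Qed.

Lemma projection_mul P E : is_projection Y P -> is_projection Y E -> P *m E = P.
Proof. by move=> [PY _] hE; exact: projection_mulmx_id hE PY. Qed.

Lemma projection_sub_corner P E : is_projection Y P -> is_projection Y E ->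
  P - E = (1%:M - E) *m (P - E) *m E.
Proof.
move=> hP hE; have EE := projection_mul hE hE.
rewrite mulmxBl mul1mx mulmxBr !mulmxBl projection_mul // EE.
by rewrite (projection_mul hE hP) subrr subr0.
Qed.

Lemma stablemx_projP E C : is_projection Y E ->
  stablemx Y C <-> forall Z, \tr ((1%:M - E) *m Z *m E *m C) = 0.
Proof.
move=> hE; have [EY _] := hE; have EE := projection_mul hE hE.
have corner_trace Z :
    \tr ((1%:M - E) *m Z *m E *m C) = \tr (Z *m (E *m C *m (1%:M - E))).
  by rewrite -!mulmxA mxtrace_mulC !mulmxA.
split=> [YC Z | trC0].
  have ECE : E *m C *m E = E *m C.
    apply: projection_mulmx_id hE _.
    by have [M ->] := submxP EY; rewrite -mulmxA (submx_trans (submxMl _ _) YC).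
  rewrite -mulmxA -ECE !mulmxA mxtrace_mulC !mulmxA.
  by rewrite mulmxBr mulmx1 EE subrr !mul0mx mxtrace0.
have ECE : E *m C = E *m C *m E.
  apply/eqP; rewrite -subr_eq0 -{1}(mulmx1 (E *m C)) -mulmxBr.
  by apply/eqP/mxtrace_mull_eq0 => Z; rewrite -corner_trace.
rewrite -{1}(projection_mulmx_id hE (submx_refl Y)) -mulmxA ECE !mulmxA.
exact: submx_trans (submxMl _ _) EY.
Qed.

Lemma corner_space_rank E : is_projection Y E ->
  (\rank (corner_space E) <= (n - \rank Y) * \rank Y)%N.
Proof.
move=> hE; have [EY _] := hE.
apply: leq_trans (rank_leq_row _) (leq_mul _ (mxrankS EY)).
have YE : (Y <= kermx (1%:M - E))%MS.
  by apply/sub_kermxP; rewrite mulmxBr mulmx1 projection_mulmx_id ?subrr.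
by have := mxrankS YE; rewrite mxrank_ker !leq_subRL ?rank_leq_row // addnC.
Qed.

End Projections.

Lemma shift_weights_to_boundary (R : realFieldType) l (a c : 'I_l -> R) j :
  (forall i, 0 < a i) -> \sum_i c i = 0 -> c j != 0 ->
  exists t, (forall i, 0 <= a i + t * c i) /\ exists j0, a j0 + t * c j0 = 0.
Proof.
move=> a_gt0 c_sum0 cj0.
have [j' cj'] : exists j, c j < 0.
  apply: contra_notP (negP cj0) => no_neg.
  have c_ge0 i (_ : true) : 0 <= c i.
    by rewrite leNgt; apply/negP => ci; apply: no_neg; exists i.
  exact/eqP/(psumr_eq0P c_ge0).
case: (@arg_minP _ _ _ j' [pred i | c i < 0] (fun i => a i / - c i) cj').
move=> j0 cj0_lt min_j0.
have t_ge0 : 0 <= a j0 / - c j0 by rewrite divr_ge0 ?oppr_ge0 ?ltW.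
exists (a j0 / - c j0); split=> [i|]; last by exists j0; field; rewrite lt_eqF.
have [ci_lt0|ci_ge0] := ltP (c i) 0.
  by have := min_j0 i ci_lt0; rewrite ler_pdivlMr ?oppr_gt0 // mulrN; lra.
by apply: addr_ge0; [exact: ltW | exact: mulr_ge0].
Qed.

Lemma sum_setT (V : nmodType) l (F : 'I_l -> V) :
  \sum_(i in [set: 'I_l]) F i = \sum_i F i.
Proof. by apply: eq_bigl => i; rewrite finset.in_setT. Qed.

Lemma CM_minimal_comb_eq0 (R : realType) n (N : 'rV[R]_n -> R) Y l x f a
    (c : 'rV[R]_l) :
  CM_on N Y x f a [set: 'I_l] -> CM_minimal N Y x f -> \sum_i c 0 i = 0 ->
  stablemx Y (\sum_i c 0 i *: (f i *m x i)) -> c = 0.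
Proof.
move=> [ext a_gt0 a_sum1 stabT P0fix] minimal c_sum0 stabC.
rewrite sum_setT in a_sum1; rewrite sum_setT in stabT.
apply/rowP => j; apply/eqP; rewrite mxE; apply/negPn/negP => cj0.
have [t [b_ge0 [j0 bj0]]] :=
  shift_weights_to_boundary (fun i => a_gt0 i (finset.in_setT i)) c_sum0 cj0.
pose b i := a i + t * c 0 i; pose J := [set i | b i != 0].
have sumJ (V : nmodType) (F : 'I_l -> V) :
    (forall i, b i = 0 -> F i = 0) -> \sum_(i in J) F i = \sum_i F i.
  move=> F0; rewrite big_mkcond; apply: eq_bigr => i _; rewrite inE.
  by have [/F0 ->|] := eqVneq (b i) 0.
apply: (minimal J b).
  apply/properP; split; first by apply/fintype.subsetP => i _; exact: in_setT.
  by exists j0; rewrite ?in_setT // inE negbK; apply/eqP.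
split.
- by move=> i _; exact: ext i (finset.in_setT i).
- by move=> i; rewrite inE => bi0; rewrite lt_def bi0 b_ge0.
- by rewrite sumJ // big_split /= -mulr_sumr a_sum1 c_sum0 mulr0 addr0.
- rewrite sumJ => [|i ->]; last by rewrite scale0r.
  under eq_bigr do rewrite scalerDl -scalerA.
  rewrite big_split /= -scaler_sumr mulmxDr -scalemxAr.
  by apply: addmx_sub => //; exact: scalemx_sub.
- have [P0 [P0min P0fix']] := P0fix.
  by exists P0; split => // i _; exact: P0fix' i (finset.in_setT i).
Qed.

Lemma fapp_mulmx_tr (R : realType) n (f : 'cV[R]_n) (x : 'rV[R]_n) D :
  fapp f (x *m D) = \tr (D *m (f *m x)).
Proof. by rewrite /fapp mulmxA mxtrace_mulC mulmxA trace_mx11. Qed.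

Lemma affdim_le (R : realType) n (S : set 'M[R]_n) P d :
  S P -> affine_in S d -> affdim S <= d%:Z.
Proof.
move=> SP Sd; rewrite /affdim; case: pselect => [?|[]]; last by exists P.
by rewrite lez_nat; case: ex_minnP => m Sm; apply.
Qed.

Section MinimalProjections.
Variables (R : realType) (n : nat) (N : 'rV[R]_n -> R) (Y : 'M[R]_n) (l : nat).
Variables (x : 'I_l -> 'rV[R]_n) (f : 'I_l -> 'cV[R]_n) (a : 'I_l -> R).
Variable P0 : 'M[R]_n.
Hypotheses (hN : is_norm N) (P0min : Pmin N Y P0).
Hypothesis x_ball : forall i, N (x i) <= 1.
Hypothesis f_ball : forall i, dual_norm N (f i) <= 1.
Hypotheses (a_gt0 : forall i, 0 < a i) (stabT : stablemx Y (CM_op x f a)).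
Hypothesis P0fix : forall i, fapp (f i) (x i *m P0) = proj_const N Y.

Lemma Pmin_trace_orth P i : Pmin N Y P -> \tr ((P - P0) *m (f i *m x i)) = 0.
Proof.
move=> [hP normP]; have [hP0 _] := P0min.
have tr_fapp j :
    \tr ((P - P0) *m (f j *m x j)) = fapp (f j) (x j *m P) - proj_const N Y.
  by rewrite -(P0fix j) !fapp_mulmx_tr mulmxBl raddfB.
have fapp_le j : fapp (f j) (x j *m P) <= proj_const N Y.
  by rewrite -normP; exact: fapp_le_op_norm.
have trT : \tr ((P - P0) *m CM_op x f a) = 0.
  rewrite (projection_sub_corner hP hP0).
  exact: (stablemx_projP _ hP0).1 stabT _.
have sum0 : \sum_j a j * (proj_const N Y - fapp (f j) (x j *m P)) = 0.
  transitivity (- \tr ((P - P0) *m CM_op x f a)); last by rewrite trT oppr0.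
  rewrite /CM_op mulmx_sumr [\tr _]raddf_sum -sumrN /=; apply: eq_bigr => j _.
  by rewrite -scalemxAr mxtraceZ tr_fapp -mulrN opprB.
have term_ge0 j (_ : true) :
    0 <= a j * (proj_const N Y - fapp (f j) (x j *m P)).
  by rewrite mulr_ge0 ?subr_ge0 ?fapp_le // ltW.
move/eqP: (psumr_eq0P term_ge0 sum0 (i := i) isT).
by rewrite mulf_eq0 gt_eqF //= subr_eq0 tr_fapp => /eqP <-; rewrite subrr.
Qed.

Lemma Pmin_sub_corner_ker P : Pmin N Y P ->
  (mxvec (P - P0)
     <= corner_space P0 :&: kermx (trace_pairing (fun i => f i *m x i)))%MS.
Proof.
move=> Pmin_P; have [hP _] := Pmin_P; have [hP0 _] := P0min.
rewrite sub_capmx; apply/andP; split.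
  by rewrite (projection_sub_corner hP hP0) -corner_mapE -mul_vec_lin submxMl.
apply/sub_kermxP; rewrite mulmx_trace_pairing mxvecK; apply/rowP => i.
by rewrite !mxE Pmin_trace_orth.
Qed.

Lemma Pmin_affine_in : affine_in (Pmin N Y)
  (\rank (corner_space P0 :&: kermx (trace_pairing (fun i => f i *m x i)))).
Proof.
apply/asboolP; exists P0.
exists (corner_space P0 :&: kermx (trace_pairing (fun i => f i *m x i)))%MS.
by split=> // P; exact: Pmin_sub_corner_ker.
Qed.

End MinimalProjections.

Lemma rank_corner_trace_image (R : realType) n (N : 'rV[R]_n -> R) Y l x f a E :
  CM_on N Y x f a [set: 'I_l] -> CM_minimal N Y x f -> is_projection Y E ->
  (l <= \rank (corner_space E *m trace_pairing (fun i => f i *m x i)) + 1)%N.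
Proof.
move=> hCM minimal hE; rewrite leqNgt; apply/negP.
case/exists_ker_sum0 => c /eqP c0 [Uc c_sum0]; apply: c0.
apply: (CM_minimal_comb_eq0 hCM minimal c_sum0).
apply/(stablemx_projP _ hE) => Z.
rewrite -corner_mapE -[corner_map _]mxvecK -mul_vec_lin -trace_pairing_comb.
rewrite -[lin_mx _]/(corner_space E) -!mulmxA (mulmxA (corner_space E)).
by rewrite Uc mulmx0 mxE.
Qed.

Theorem mainTheorem11 (R : realType) (n k l : nat)
  (N : 'rV[R]_n -> R) (Y : 'M[R]_n) :
  is_norm N ->
  (1 <= k)%N -> (k <= n - 1)%N ->
  \rank Y = k ->
  (exists (x : 'I_l -> 'rV[R]_n) (f : 'I_l -> 'cV[R]_n) (a : 'I_l -> R)
          (T : 'M[R]_n),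
      is_CM_operator N Y x f a T /\ CM_minimal N Y x f) ->
  affdim (Pmin N Y) <= (k * (n - k))%:Z - l%:Z + 1.
Proof.
move=> hN _ _ rkY [x [f [a [_ [[hCM _] minimal]]]]].
have [ext a_gt0 _ stab_setT [P0 [P0min P0fix]]] := hCM.
have inT (i : 'I_l) : i \in [set: 'I_l] := finset.in_setT i.
have stabT : stablemx Y (CM_op x f a) by rewrite /CM_op -sum_setT.
have affW := Pmin_affine_in hN P0min (fun i => (ext i (inT i)).1.1)
  (fun i => (ext i (inT i)).2.1) (fun i => a_gt0 i (inT i)) stabT
  (fun i => P0fix i (inT i)).
have [hP0 _] := P0min.
have := affdim_le P0min affW.
have := mxrank_mul_ker (corner_space P0) (trace_pairing (fun i => f i *m x i)).
have := corner_space_rank hP0.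
have := rank_corner_trace_image hCM minimal hP0.
by rewrite rkY; lia.
Qed.
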